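(* The class of languages representable by Xtructures over a finite alphabet $\Sigma$ is exactly the class of languages recognized by deterministic acyclic finite state automata (DAFSAs) over $\Sigma$: for every Xtructure there is a DAFSA accepting the same language, and for every DAFSA there is an Xtructure representing the same language.
   Context: Fix a finite alphabet $\Sigma$. A symbol layer is a nonempty subset $S \subseteq \Sigma$, represented as a single character, a finite disjunction of characters, or a character class. A token structure is a finite sequence $(l_1,\dots,l_n)$ of symbol layers, representing the strings $c_1\cdots c_n$ with $c_i\in l_i$. A branch is a finite sequence of token structures interleaved with fixed delimiter characters, representing the corresponding concatenations. An Xtructure $X$ is a finite set of branches and represents the language $L(X)$, the union of the languages of its branches; equivalently it is a directed acyclic graph whose nodes are symbol layers and whose edges are transitions, deterministic in that a string is never represented by more than one branch. A DAFSA is a deterministic finite automaton whose transition graph is acyclic. *)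

From mathcomp Require Import all_boot.
Set Implicit Arguments. Unset Strict Implicit. Unset Printing Implicit Defensive.

Section Defs.
Variable Sigma : finType.

Definition word := seq Sigma.

(* A symbol layer: a subset of Sigma (nonemptiness is required in [xtructure]).
   Single characters, disjunctions and character classes all denote such subsets. *)
Definition layer := {set Sigma}.

Definition token_structure := seq layer.

Definition in_token (t : token_structure) (w : word) : Prop :=
  size w = size t /\ all2 (fun c (l : layer) => c \in l) w t.

Inductive item := Tok of token_structure | Delim of Sigma.

Definition in_item (it : item) (w : word) : Prop :=
  match it with
  | Tok t => in_token t w
  | Delim c => w = [:: c]
  end.

Definition branch := seq item.

Definition in_branch (b : branch) (w : word) : Prop :=
  exists ws : seq word,
    size ws = size b /\ w = flatten ws /\
    (forall i, i < size b -> in_item (nth (Tok [::]) b i) (nth [::] ws i)).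

Definition item_layers_nonempty (it : item) : Prop :=
  match it with
  | Tok t => forall l, l \in t -> l != set0
  | Delim _ => True
  end.

Record xtructure := Xtructure {
  branches : seq branch;
  layers_nonempty : forall i k, i < size branches -> k < size (nth [::] branches i) ->
      item_layers_nonempty (nth (Tok [::]) (nth [::] branches i) k);
  deterministic : forall i j (w : word), i < size branches -> j < size branches ->
      in_branch (nth [::] branches i) w -> in_branch (nth [::] branches j) w -> i = j
}.

Definition in_xlang (X : xtructure) (w : word) : Prop :=
  exists2 i, i < size (branches X) & in_branch (nth [::] (branches X) i) w.

Record dafsa := Dafsa {
  state : finType;
  start : state;
  final : {set state};
  delta : state -> Sigma -> option state;
  acyclic : forall q q' (a : Sigma), delta q a = Some q' ->
      ~~ connect (fun x y => [exists c, delta x c == Some y]) q' q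
}.

Fixpoint run (A : dafsa) (q : state A) (w : word) : option (state A) :=
  match w with
  | [::] => Some q
  | c :: w' => if delta q c is Some q' then run q' w' else None
  end.

Definition accepts (A : dafsa) (w : word) : Prop :=
  exists2 q, run (start A) w = Some q & q \in final A.
End Defs.

From mathcomp Require Import all_boot boolp.
Set Implicit Arguments. Unset Strict Implicit. Unset Printing Implicit Defensive.

(* Both devices describe exactly the finite languages.  Every word represented
   by a branch has length equal to the total width of the branch, so the
   language of an Xtructure is bounded in length; along a run of a DAFSA the
   sets of reachable states strictly decrease (acyclicity), so an accepted word
   is shorter than the number of states.  Conversely, a language of words of
   length at most N is accepted by the trie whose states are the words of
   length at most N, and a finite language is represented by the Xtructure
   having one branch of delimiters per word. *)

Section Finite_languages.
Variable Sigma : finType.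

Fixpoint words_upto n : seq (word Sigma) :=
  if n is n'.+1 then [::] :: [seq c :: w | c <- enum Sigma, w <- words_upto n']
  else [:: [::]].

Lemma mem_words_upto n w : (w \in words_upto n) = (size w <= n).
Proof.
elim: n w => [|n IHn] [|c w] //=; rewrite in_cons /=.
apply/allpairsP/idP => [[[c' w']] [/= _ w'_n [_ ->]]|w_n].
  by rewrite ltnS -IHn.
by exists (c, w); rewrite mem_enum IHn.
Qed.

Lemma nil_words_upto n : [::] \in words_upto n.
Proof. by rewrite mem_words_upto. Qed.

Lemma in_branch_nil (w : word Sigma) : in_branch [::] w <-> w = [::].
Proof.
split; first by case=> [[|? ?]] [] // _ [->].
by move=> ->; exists [::].
Qed.

Lemma in_branch_cons (it : item Sigma) b w :
  in_branch (it :: b) w <->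
  exists w1 w2, [/\ w = w1 ++ w2, in_item it w1 & in_branch b w2].
Proof.
split.
  case=> [[|w1 ws]] [] //= [size_ws] [->] ws_in.
  exists w1, (flatten ws); split => //; first exact: (ws_in 0).
  by exists ws; do 2!split => //; move=> i; apply: (ws_in i.+1).
case=> w1 [w2] [-> w1_in [ws [size_ws [-> ws_in]]]].
exists (w1 :: ws); split; first by rewrite /= size_ws.
by split => // [[|i]] //=; apply: ws_in.
Qed.

Definition item_width (it : item Sigma) := if it is Tok t then size t else 1.

Definition branch_width (b : branch Sigma) := sumn (map item_width b).

Definition xtructure_width (X : xtructure Sigma) :=
  \max_(b <- branches X) branch_width b.

Lemma size_in_branch b w : in_branch b w -> size w = branch_width b.
Proof.
elim: b w => [|it b IHb] w; first by move/in_branch_nil ->.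
case/in_branch_cons => w1 [w2] [-> w1_in /IHb w2_size].
rewrite size_cat w2_size; congr (_ + _).
by case: it w1_in => [t []|c ->].
Qed.

Lemma in_xlang_size (X : xtructure Sigma) w :
  in_xlang X w -> size w <= xtructure_width X.
Proof.
case=> i + /size_in_branch ->; rewrite /xtructure_width.
elim: (branches X) i => [|b bs IHbs] [|i] //= i_lt; rewrite big_cons leq_max.
  by rewrite leqnn.
by rewrite IHbs ?orbT.
Qed.

Lemma in_branch_delims (u w : word Sigma) :
  in_branch (map (@Delim Sigma) u) w <-> w = u.
Proof.
elim: u w => [|c u IHu] w /=; first exact: in_branch_nil.
rewrite in_branch_cons; split => [[w1] [w2] [-> /= -> /IHu ->] //|->].
by exists [:: c], u; split => //; apply/IHu.
Qed.

Section Delim_xtructure.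
Variable s : seq (word Sigma).
Hypothesis s_uniq : uniq s.

Definition delim_branches := map (map (@Delim Sigma)) s.

Lemma delim_layers_nonempty i k :
  item_layers_nonempty (nth (Tok [::]) (nth [::] delim_branches i) k).
Proof.
have [i_lt | i_ge] := ltnP i (size s).
  by rewrite (nth_map [::]) //; elim: (nth [::] s i) k => [|c u IHu] [|k] //=.
by rewrite [nth [::] _ i]nth_default ?size_map // nth_nil.
Qed.

Lemma delim_deterministic i j w : i < size delim_branches -> j < size delim_branches ->
  in_branch (nth [::] delim_branches i) w -> in_branch (nth [::] delim_branches j) w ->
  i = j.
Proof.
rewrite size_map => i_lt j_lt; rewrite !(nth_map [::]) //.
move=> /in_branch_delims -> /in_branch_delims si_sj.
by apply/eqP; rewrite -(nth_uniq [::] i_lt j_lt s_uniq) si_sj.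
Qed.

Definition delim_xtructure : xtructure Sigma :=
  Xtructure (fun i k _ _ => delim_layers_nonempty i k) delim_deterministic.

Lemma in_delim_xtructure w : in_xlang delim_xtructure w <-> w \in s.
Proof.
rewrite /in_xlang /= size_map; split => [[i i_lt]|w_in].
  by rewrite (nth_map [::]) // => /in_branch_delims ->; apply: mem_nth.
exists (index w s); rewrite ?index_mem //.
by rewrite (nth_map [::]) ?index_mem // nth_index //; apply/in_branch_delims.
Qed.
End Delim_xtructure.

Lemma bounded_xtructure (L : word Sigma -> Prop) N :
  (forall w, L w -> size w <= N) ->
  exists X : xtructure Sigma, forall w, in_xlang X w <-> L w.
Proof.
move=> L_size; pose s := [seq w <- words_upto N | `[< L w >]].
exists (delim_xtructure (undup_uniq s)) => w.
rewrite in_delim_xtructure mem_undup mem_filter mem_words_upto.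
by split => [/andP[/asboolP]|Lw] //; rewrite L_size // andbT; apply/asboolP.
Qed.

Section Trie.
Variables (N : nat) (L : word Sigma -> Prop).

Definition trie_state := seq_sub (words_upto N).

Definition trie_start : trie_state := Sub [::] (nil_words_upto N).

Definition trie_final : {set trie_state} := [set q | `[< L (val q) >]].

Definition trie_delta (q : trie_state) (c : Sigma) : option trie_state :=
  insub (rcons (val q) c).

Lemma trie_delta_size q c q' :
  trie_delta q c = Some q' -> size (val q') = (size (val q)).+1.
Proof.
by rewrite /trie_delta; case: insubP => // u _ u_q [<-]; rewrite u_q size_rcons.
Qed.

Lemma trie_connect_size (q q' : trie_state) :
  connect (fun x y => [exists c, trie_delta x c == Some y]) q q' ->
  size (val q) <= size (val q').
Proof.
case/connectP => p; elim: p q => [|x p IHp] q /=; first by move=> _ ->.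
case/andP => /existsP[c /eqP/trie_delta_size q_x] x_p p_q'.
by apply: ltnW; rewrite -q_x IHp.
Qed.

Lemma trie_acyclic q q' (c : Sigma) : trie_delta q c = Some q' ->
  ~~ connect (fun x y => [exists c, trie_delta x c == Some y]) q' q.
Proof.
by move/trie_delta_size => q_q'; apply/negP => /trie_connect_size; rewrite q_q' ltnn.
Qed.

Definition trie : dafsa Sigma := Dafsa trie_start trie_final trie_acyclic.

Lemma run_trie (q q' : trie_state) w : @run _ trie q w = Some q' -> val q' = val q ++ w.
Proof.
elim: w q => [|c w IHw] q /=; first by case=> <-; rewrite cats0.
by rewrite /trie_delta; case: insubP => // u _ u_q /IHw ->; rewrite u_q cat_rcons.
Qed.

Lemma run_trie_defined (q : trie_state) w :
  size (val q ++ w) <= N -> exists q', @run _ trie q w = Some q'.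
Proof.
elim: w q => [|c w IHw] q /=; first by exists q.
rewrite /trie_delta; case: insubP => [u _ u_q qw_N|].
  by apply: IHw; rewrite u_q cat_rcons.
rewrite mem_words_upto size_rcons size_cat /= addnS => /negP q_c_N /(leq_trans _) qw_N.
by case: q_c_N; apply: qw_N; rewrite ltnS leq_addr.
Qed.

Lemma trie_accepts w : accepts trie w <-> size w <= N /\ L w.
Proof.
split => [[q /run_trie /= q_w]|[w_N Lw]].
  by rewrite inE asboolE -q_w -mem_words_upto; split => //; apply: ssvalP.
have [q q_w] := @run_trie_defined trie_start w w_N.
by exists q => //; rewrite inE asboolE (run_trie q_w).
Qed.
End Trie.

Lemma bounded_dafsa (L : word Sigma -> Prop) N :
  (forall w, L w -> size w <= N) ->
  exists A : dafsa Sigma, forall w, accepts A w <-> L w.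
Proof.
move=> L_size; exists (trie N L) => w; rewrite trie_accepts.
by split => [[]|Lw] //; split => //; apply: L_size.
Qed.

Definition reachable (A : dafsa Sigma) (q : state A) :=
  [set x | connect (fun x y => [exists c, delta x c == Some y]) q x].

Lemma run_size_lt (A : dafsa Sigma) (q q' : state A) w :
  run q w = Some q' -> size w < #|reachable q|.
Proof.
elim: w q => [|c w IHw] q /=.
  by move=> _; apply/card_gt0P; exists q; rewrite inE connect0.
case q_c: (delta q c) => [q1|] // /IHw w_lt; apply: leq_ltn_trans w_lt _.
apply: proper_card; apply/properP; split.
  apply/subsetP => x; rewrite !inE; apply: connect_trans.
  by apply: connect1; apply/existsP; exists c; rewrite q_c.
by exists q; rewrite !inE ?connect0 ?(acyclic q_c).
Qed.

Lemma accepts_size_lt (A : dafsa Sigma) w : accepts A w -> size w < #|state A|.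
Proof. by case=> q /run_size_lt w_lt _; apply: leq_trans w_lt (max_card _). Qed.

End Finite_languages.

Theorem mainTheorem3 (Sigma : finType) :
  (forall X : xtructure Sigma, exists A : dafsa Sigma,
      forall w : word Sigma, accepts A w <-> in_xlang X w) /\
  (forall A : dafsa Sigma, exists X : xtructure Sigma,
      forall w : word Sigma, in_xlang X w <-> accepts A w).
Proof.
split => [X | A].
  exact: bounded_dafsa (@in_xlang_size _ X).
by apply: (@bounded_xtructure _ _ #|state A|) => w /accepts_size_lt /ltnW.
Qed.
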